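(* Let $\mathcal B=(\mathcal B_1,\dots,\mathcal B_B)$ be a partition of $\{1,\dots,N\}$ with weights $\omega=(\omega_1,\dots,\omega_B)$, $\omega_b\ge1$. Let $1\le p\le q\le2$ and suppose $A\in\mathbb R^{m\times N}$ satisfies the $\ell^q_\omega$-BRNSP of order $s\ge\|\omega\|_\infty^2$ with constants $0<\rho<1$ and $\tau>0$. Then for all $x,z\in\mathbb R^N$, $$\|z-x\|_{2,p}^{(\omega)}\le\frac{C_\rho}{s^{1-1/p}}\Big(\|z\|_{2,1}^{(\omega)}-\|x\|_{2,1}^{(\omega)}+2\sigma_s(x)_{2,1}^{(\omega)}\Big)+\frac{D_{\rho,\tau}}{s^{1/q-1/p}}\|A(z-x)\|_2,$$ with $C_\rho=\frac{(1+\rho)^2}{1-\rho}$ and $D_{\rho,\tau}=\frac{3+\rho}{1-\rho}\tau$.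
   Context: Block structure: $\mathcal B=(\mathcal B_1,\dots,\mathcal B_B)$ partition of $\{1,\dots,N\}$; $x[b]=x[\mathcal B_b]$; for $S\subseteq\{1,\dots,B\}$, $x[S]$ equals $x$ on blocks in $S$ and $0$ elsewhere, $S^c$ its complement in $\{1,\dots,B\}$. Weights $\omega_b\ge1$, $\|\omega\|_\infty=\max_b\omega_b$, $\omega(S)=\sum_{b\in S}\omega_b^2$. $\|x\|_{2,p}^{(\omega)}=\big(\sum_b\omega_b^{2-p}\|x[b]\|_2^p\big)^{1/p}$. $\|x\|_0^{(\omega)}=\omega(\{b:x[b]\ne0\})$. $\sigma_s(x)_{2,p}^{(\omega)}=\inf\{\|x-z\|_{2,p}^{(\omega)}:\|z\|_0^{(\omega)}\le s\}$. Definition ($\ell^p_\omega$-BRNSP): $A\in\mathbb R^{m\times N}$ satisfies the weighted block $\ell^p$ robust null space property of order $s\ge\|\omega\|_\infty$ with constants $\rho\in(0,1)$, $\tau>0$ if $\|x[S]\|_{2,p}^{(\omega)}\le\frac{\rho}{s^{1-1/p}}\|x[S^c]\|_{2,1}^{(\omega)}+\tau\|Ax\|_2$ for all $x\in\mathbb R^N$ and all $S\subseteq\{1,\dots,B\}$ with $\omega(S)\le s$. *)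

From Stdlib Require Import Reals Lra ClassicalEpsilon.
Open Scope R_scope.

Fixpoint fsum (n : nat) (f : nat -> R) : R :=
  match n with O => 0 | S k => fsum k f + f k end.

Fixpoint fmax (n : nat) (f : nat -> R) : R :=
  match n with O => 0 | S k => Rmax (fmax k f) (f k) end.

(* t^a for t >= 0, with the convention 0^a = 0 (a > 0 in all uses) *)
Definition rpow (t a : R) : R :=
  if Req_EM_T t 0 then 0 else Rpower t a.

(* Setting: vectors of R^N are functions nat -> R (only indices < N matter);
   blk i (for i < N) is the index in {0,..,B-1} of the block containing i;
   w b (for b < B) is the weight omega_b. *)

Definition blocknorm (N : nat) (blk : nat -> nat) (x : nat -> R) (b : nat) : R :=
  sqrt (fsum N (fun i => if Nat.eqb (blk i) b then (x i)^2 else 0)).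

Definition wnorm (N B : nat) (blk : nat -> nat) (w : nat -> R) (p : R)
  (x : nat -> R) : R :=
  rpow (fsum B (fun b => Rpower (w b) (2 - p) * rpow (blocknorm N blk x b) p)) (1 / p).

Definition wsize (B : nat) (w : nat -> R) (S : nat -> bool) : R :=
  fsum B (fun b => if S b then (w b)^2 else 0).

Definition winf (B : nat) (w : nat -> R) : R := fmax B w.

Definition restr (blk : nat -> nat) (S : nat -> bool) (x : nat -> R) : nat -> R :=
  fun i => if S (blk i) then x i else 0.

Definition compl (S : nat -> bool) : nat -> bool := fun b => negb (S b).

Definition wzero (N B : nat) (blk : nat -> nat) (w : nat -> R) (x : nat -> R) : R :=
  wsize B w (fun b => if Req_EM_T (blocknorm N blk x b) 0 then false else true).

Definition is_glb (E : R -> Prop) (r : R) : Prop :=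
  (forall y, E y -> r <= y) /\ (forall l, (forall y, E y -> l <= y) -> l <= r).

Definition best_s_term_err (N B : nat) (blk : nat -> nat) (w : nat -> R) (s p : R)
  (x : nat -> R) : R :=
  epsilon (inhabits 0)
    (is_glb (fun r => exists z : nat -> R,
               wzero N B blk w z <= s /\ r = wnorm N B blk w p (fun i => x i - z i))).

Definition matvec (m N : nat) (A : nat -> nat -> R) (x : nat -> R) : nat -> R :=
  fun j => fsum N (fun i => A j i * x i).

Definition norm2 (m : nat) (y : nat -> R) : R := sqrt (fsum m (fun j => (y j)^2)).

Definition BRNSP (m N B : nat) (blk : nat -> nat) (w : nat -> R)
  (A : nat -> nat -> R) (p s rho tau : R) : Prop :=
  winf B w <= s /\ 0 < rho < 1 /\ 0 < tau /\
  forall (x : nat -> R) (S : nat -> bool),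
    wsize B w S <= s ->
    wnorm N B blk w p (restr blk S x)
      <= rho / Rpower s (1 - 1 / p) * wnorm N B blk w 1 (restr blk (compl S) x)
         + tau * norm2 m (matvec m N A x).

(* With mu_b = w_b^2 and f_b = ||u[b]||_2 / w_b, the norm ||u||_{2,p}^{(w)} is the L^p(mu)
   norm of f and omega(S) = mu(S).  Hoelder's inequality on a set of measure at most s turns
   the l^q robust null space property into its l^p and l^1 versions.  The l^1 version gives
   the classical l^1 error bound for z - x in terms of ||z||_1 - ||x||_1 + 2 ||x_{S^c}||_1.
   For the l^p bound, S is the superlevel set {f > ||z - x||_{2,1} / s}, which has measure at
   most s by Markov's inequality, while on its complement f^p <= (||z - x||_{2,1} / s)^{p-1} f
   (Stechkin).  Taking S to be the block support of an s-sparse z' and passing to the infimum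
   over z' yields sigma_s(x). *)

From Stdlib Require Import Reals Lra Lia ClassicalEpsilon.
Open Scope R_scope.

Lemma fsum_ext n f g :
  (forall b, (b < n)%nat -> f b = g b) -> fsum n f = fsum n g.
Proof.
  induction n as [|n IH]; intros H; simpl; [reflexivity|].
  rewrite IH by (intros; apply H; lia). rewrite H by lia. reflexivity.
Qed.

Lemma fsum_le n f g :
  (forall b, (b < n)%nat -> f b <= g b) -> fsum n f <= fsum n g.
Proof.
  induction n as [|n IH]; intros H; simpl; [lra|].
  apply Rplus_le_compat; [apply IH; intros; apply H|apply H]; lia.
Qed.

Lemma fsum_plus n f g : fsum n (fun b => f b + g b) = fsum n f + fsum n g.
Proof. induction n as [|n IH]; simpl; [lra|]. rewrite IH. ring. Qed.

Lemma fsum_scal n c f : fsum n (fun b => c * f b) = c * fsum n f.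
Proof. induction n as [|n IH]; simpl; [lra|]. rewrite IH. ring. Qed.

Lemma fsum_0 n : fsum n (fun _ => 0) = 0.
Proof. induction n as [|n IH]; simpl; [reflexivity|]. rewrite IH. ring. Qed.

Lemma fsum_nonneg n f : (forall b, (b < n)%nat -> 0 <= f b) -> 0 <= fsum n f.
Proof. intros H. rewrite <- (fsum_0 n). apply fsum_le. exact H. Qed.

Lemma fsum_nonneg_eq0 n f :
  (forall b, (b < n)%nat -> 0 <= f b) -> fsum n f = 0 ->
  forall b, (b < n)%nat -> f b = 0.
Proof.
  induction n as [|n IH]; simpl; intros H E b Hb; [lia|].
  assert (0 <= fsum n f) by (apply fsum_nonneg; intros; apply H; lia).
  assert (0 <= f n) by (apply H; lia).
  destruct (Nat.eq_dec b n) as [->|Hbn]; [lra|].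
  apply IH; [intros; apply H; lia|lra|lia].
Qed.

Lemma fsum_split_compl n (S : nat -> bool) F :
  fsum n F = fsum n (fun b => if S b then F b else 0)
           + fsum n (fun b => if compl S b then F b else 0).
Proof.
  rewrite <- fsum_plus. apply fsum_ext. intros b _.
  unfold compl. destruct (S b); simpl; ring.
Qed.

Lemma fsum_Cauchy_Schwarz n a c :
  (fsum n (fun i => a i * c i)) ^ 2
    <= fsum n (fun i => a i ^ 2) * fsum n (fun i => c i ^ 2).
Proof.
  induction n as [|n IH]; cbn [fsum]; [lra|].
  set (AC := fsum n (fun i => a i * c i)) in *.
  set (AA := fsum n (fun i => a i ^ 2)) in *.
  set (CC := fsum n (fun i => c i ^ 2)) in *.
  assert (HAA : 0 <= AA) by (apply fsum_nonneg; intros; nra).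
  assert (HCC : 0 <= CC) by (apply fsum_nonneg; intros; nra).
  enough (2 * AC * (a n * c n) <= AA * c n ^ 2 + CC * a n ^ 2) by nra.
  destruct (Req_dec AA 0) as [E|E].
  - assert (AC = 0) by (rewrite E in IH; nra). rewrite H, E. nra.
  - (* multiply by AA and complete the square in (AA c_n - AC a_n) *)
    apply (Rmult_le_reg_l AA); [lra|].
    assert (0 <= (AA * c n - AC * a n) ^ 2) by apply pow2_ge_0.
    assert (0 <= (AA * CC - AC ^ 2) * a n ^ 2) by (apply Rmult_le_pos; [lra|apply pow2_ge_0]).
    nra.
Qed.

Lemma sqrt_fsum_sq_triangle n a c :
  sqrt (fsum n (fun i => (a i + c i) ^ 2))
    <= sqrt (fsum n (fun i => a i ^ 2)) + sqrt (fsum n (fun i => c i ^ 2)).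
Proof.
  set (AA := fsum n (fun i => a i ^ 2)). set (CC := fsum n (fun i => c i ^ 2)).
  assert (HAA : 0 <= AA) by (apply fsum_nonneg; intros; nra).
  assert (HCC : 0 <= CC) by (apply fsum_nonneg; intros; nra).
  assert (Hexp : fsum n (fun i => (a i + c i) ^ 2) = AA + CC + 2 * fsum n (fun i => a i * c i)).
  { unfold AA, CC. rewrite <- fsum_scal, <- !fsum_plus. apply fsum_ext. intros; ring. }
  assert (HAC : fsum n (fun i => a i * c i) <= sqrt AA * sqrt CC).
  { rewrite <- sqrt_mult by assumption. apply Rsqr_incr_0_var; [|apply sqrt_pos].
    rewrite Rsqr_sqrt by nra. unfold Rsqr. pose proof (fsum_Cauchy_Schwarz n a c). fold AA CC in H. nra. }
  apply Rsqr_incr_0_var.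
  - rewrite Rsqr_sqrt by (apply fsum_nonneg; intros; apply pow2_ge_0).
    rewrite Hexp. pose proof (sqrt_sqrt AA HAA). pose proof (sqrt_sqrt CC HCC). unfold Rsqr. nra.
  - pose proof (sqrt_pos AA). pose proof (sqrt_pos CC). lra.
Qed.

Lemma Rpower_1_base e : Rpower 1 e = 1.
Proof. unfold Rpower. rewrite ln_1, Rmult_0_r. apply exp_0. Qed.

Lemma rpow_nonneg t a : 0 <= rpow t a.
Proof. unfold rpow. destruct Req_EM_T; [lra|]. left. apply exp_pos. Qed.

Lemma rpow_0_l a : rpow 0 a = 0.
Proof. unfold rpow. destruct Req_EM_T; [reflexivity|lra]. Qed.

Lemma rpow_Rpower t a : 0 < t -> rpow t a = Rpower t a.
Proof. intros Ht. unfold rpow. destruct Req_EM_T; [lra|reflexivity]. Qed.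

Lemma rpow_1_r t : 0 <= t -> rpow t 1 = t.
Proof.
  intros Ht. destruct (Req_dec t 0) as [->|Ht0]; [apply rpow_0_l|].
  rewrite rpow_Rpower by lra. apply Rpower_1. lra.
Qed.

Lemma rpow_le_l a x y : 0 <= a -> 0 <= x <= y -> rpow x a <= rpow y a.
Proof.
  intros Ha Hxy. destruct (Req_dec x 0) as [->|Hx].
  - rewrite rpow_0_l. apply rpow_nonneg.
  - rewrite !rpow_Rpower by lra. apply Rle_Rpower_l; lra.
Qed.

Lemma rpow_split_1 t a : 0 <= t -> rpow t a = rpow t (a - 1) * t.
Proof.
  intros Ht. destruct (Req_dec t 0) as [->|Ht0]; [rewrite !rpow_0_l; ring|].
  rewrite !rpow_Rpower by lra. rewrite <- (Rpower_1 t) at 3 by lra.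
  rewrite <- Rpower_plus. f_equal. ring.
Qed.

Lemma rpow_rpow t a b : 0 <= t -> rpow (rpow t a) b = rpow t (a * b).
Proof.
  intros Ht. destruct (Req_dec t 0) as [->|Ht0]; [rewrite !rpow_0_l; reflexivity|].
  rewrite (rpow_Rpower t a), (rpow_Rpower t) by lra.
  rewrite rpow_Rpower by apply exp_pos. apply Rpower_mult.
Qed.

Lemma rpow_div_l t c a : 0 <= t -> 0 < c -> rpow (t / c) a = rpow t a / Rpower c a.
Proof.
  intros Ht Hc. destruct (Req_dec t 0) as [->|Ht0].
  { unfold Rdiv. rewrite Rmult_0_l, !rpow_0_l. ring. }
  rewrite !rpow_Rpower by (try apply Rdiv_pos_pos; lra).
  unfold Rpower, Rdiv. rewrite ln_mult, ln_Rinv by (try apply Rinv_pos; lra).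
  rewrite <- exp_Ropp, <- exp_plus. f_equal. ring.
Qed.

Lemma rpow_bernoulli y r : 0 <= y -> 1 <= r -> 1 + r * (y - 1) <= rpow y r.
Proof.
  intros Hy Hr. destruct (Req_dec y 0) as [->|Hy0]; [rewrite rpow_0_l; lra|].
  rewrite rpow_Rpower by lra.
  set (g := fun x => Rpower x r - r * x).
  assert (Hg' : forall c, 0 < c -> derivable_pt_lim g c (r * Rpower c (r - 1) - r)).
  { intros c Hc. unfold g. apply derivable_pt_lim_minus; [apply derivable_pt_lim_power; exact Hc|].
    rewrite <- (Rmult_1_r r) at 2. apply derivable_pt_lim_scal, derivable_pt_lim_id. }
  enough (g 1 <= g y) by (unfold g in H; rewrite Rpower_1_base in H; lra).
  destruct (Rtotal_order y 1) as [Hlt|[->|Hgt]]; [|lra|].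
  - destruct (MVT_cor2 g (fun c => r * Rpower c (r - 1) - r) y 1 Hlt) as [c [E Hc]].
    { intros; apply Hg'; lra. }
    assert (Rpower c (r - 1) <= 1)
      by (rewrite <- (Rpower_1_base (r - 1)) at 2; apply Rle_Rpower_l; lra).
    assert (0 <= (r - r * Rpower c (r - 1)) * (1 - y)) by (apply Rmult_le_pos; nra).
    lra.
  - destruct (MVT_cor2 g (fun c => r * Rpower c (r - 1) - r) 1 y Hgt) as [c [E Hc]].
    { intros; apply Hg'; lra. }
    assert (1 <= Rpower c (r - 1))
      by (rewrite <- (Rpower_O c) at 1 by lra; apply Rle_Rpower; lra).
    assert (0 <= (r * Rpower c (r - 1) - r) * (y - 1))
      by (apply Rmult_le_pos; nra).
    lra.
Qed.

Lemma rpow_add_le X Y a :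
  0 <= X -> 0 <= Y -> 0 < a <= 1 -> rpow (X + Y) a <= rpow X a + rpow Y a.
Proof.
  intros HX HY Ha. set (T := X + Y).
  destruct (Req_dec T 0) as [E|E].
  { rewrite E, rpow_0_l. pose proof (rpow_nonneg X a). pose proof (rpow_nonneg Y a). lra. }
  (* y^(a-1) is nonincreasing since a - 1 <= 0 *)
  assert (Hkey : forall Z, 0 <= Z <= T -> Z * rpow T (a - 1) <= rpow Z a).
  { intros Z HZ. destruct (Req_dec Z 0) as [->|HZ0]; [rewrite rpow_0_l; lra|].
    rewrite (rpow_split_1 Z), Rmult_comm by lra. apply Rmult_le_compat_r; [lra|].
    rewrite !rpow_Rpower by (unfold T in *; lra).
    replace (a - 1) with (- (1 - a)) by ring. rewrite !Rpower_Ropp.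
    apply Rinv_le_contravar; [apply exp_pos|]. apply Rle_Rpower_l; lra. }
  rewrite (rpow_split_1 T) by (unfold T; lra).
  pose proof (Hkey X ltac:(unfold T; lra)). pose proof (Hkey Y ltac:(unfold T; lra)).
  unfold T at 2. lra.
Qed.

Lemma fsum_rpow_jensen n mu g r :
  (forall b, (b < n)%nat -> 0 <= mu b) -> (forall b, (b < n)%nat -> 0 <= g b) ->
  1 <= r -> 0 < fsum n mu ->
  fsum n mu * rpow (fsum n (fun b => mu b * g b) / fsum n mu) r
    <= fsum n (fun b => mu b * rpow (g b) r).
Proof.
  intros Hmu Hg Hr HM.
  set (M := fsum n mu) in *. set (X := fsum n (fun b => mu b * g b)).
  assert (HX : 0 <= X) by (apply fsum_nonneg; intros; apply Rmult_le_pos; auto).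
  set (a := X / M).
  destruct (Req_dec a 0) as [Ea|Ea].
  { rewrite Ea, rpow_0_l, Rmult_0_r.
    apply fsum_nonneg. intros. apply Rmult_le_pos; auto using rpow_nonneg. }
  assert (Ha : 0 < a) by (assert (0 <= a) by (apply Rle_mult_inv_pos; lra); lra).
  rewrite rpow_Rpower by exact Ha.
  (* sum the tangent line of y |-> y^r at y = a, weighted by mu *)
  apply Rle_trans
    with (fsum n (fun b => mu b * (Rpower a r * (1 + r * (g b / a - 1))))).
  - right.
    rewrite (fsum_ext _ _ (fun b => Rpower a r * (1 - r) * mu b
                                    + r * Rpower a r / a * (mu b * g b)))
      by (intros; field; lra).
    rewrite fsum_plus, !fsum_scal. fold M X.
    replace X with (a * M) by (unfold a; field; lra). field. lra.
  - apply fsum_le. intros b Hb. apply Rmult_le_compat_l; [auto|].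
    assert (HPa : 0 < Rpower a r) by apply exp_pos.
    pose proof (rpow_bernoulli (g b / a) r) as Hbern.
    rewrite rpow_div_l in Hbern by auto.
    replace (rpow (g b) r) with (Rpower a r * (rpow (g b) r / Rpower a r)) by (field; lra).
    apply Rmult_le_compat_l; [lra|]. apply Hbern; [apply Rle_mult_inv_pos; auto|exact Hr].
Qed.

Lemma fsum_rpow_holder n mu f p q s :
  (forall b, (b < n)%nat -> 0 <= mu b) -> (forall b, (b < n)%nat -> 0 <= f b) ->
  1 <= p <= q -> fsum n mu <= s ->
  rpow (fsum n (fun b => mu b * rpow (f b) p)) (1 / p)
    <= Rpower s (1 / p - 1 / q) * rpow (fsum n (fun b => mu b * rpow (f b) q)) (1 / q).
Proof.
  intros Hmu Hf Hpq HMs.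
  set (X := fsum n (fun b => mu b * rpow (f b) p)).
  set (Y := fsum n (fun b => mu b * rpow (f b) q)).
  set (M := fsum n mu) in *.
  assert (HX : 0 <= X) by (apply fsum_nonneg; intros; apply Rmult_le_pos; auto using rpow_nonneg).
  destruct (Req_dec X 0) as [X0|X0].
  { rewrite X0, rpow_0_l. apply Rmult_le_pos; [left; apply exp_pos|apply rpow_nonneg]. }
  assert (HM : 0 < M).
  { assert (0 <= M) by (apply fsum_nonneg; exact Hmu).
    destruct (Req_dec M 0) as [E|E]; [|lra]. exfalso. apply X0.
    unfold X. rewrite <- (fsum_0 n). apply fsum_ext. intros b Hb.
    rewrite (fsum_nonneg_eq0 n mu Hmu E b Hb). ring. }
  set (a := X / M).
  assert (Ha : 0 < a) by (apply Rdiv_pos_pos; lra).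
  assert (Hjensen : M * Rpower a (q / p) <= Y).
  { rewrite <- rpow_Rpower by exact Ha.
    replace Y with (fsum n (fun b => mu b * rpow (rpow (f b) p) (q / p))).
    - apply fsum_rpow_jensen; auto using rpow_nonneg.
      apply (Rmult_le_reg_r p); [lra|]. field_simplify; lra.
    - apply fsum_ext. intros b Hb. rewrite rpow_rpow by auto. do 2 f_equal. field. lra. }
  assert (HMa : 0 < M * Rpower a (q / p)) by (apply Rmult_lt_0_compat; [lra|apply exp_pos]).
  rewrite !rpow_Rpower by lra.
  apply Rle_trans with (Rpower M (1 / p - 1 / q) * Rpower (M * Rpower a (q / p)) (1 / q)).
  - right. replace X with (M * a) by (unfold a; field; lra).
    rewrite <- !Rpower_mult_distr by (try apply exp_pos; lra).
    rewrite Rpower_mult, <- Rmult_assoc, <- Rpower_plus.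
    replace (q / p * (1 / q)) with (1 / p) by (field; lra).
    replace (1 / p - 1 / q + 1 / q) with (1 / p) by ring. reflexivity.
  - assert (1 / q <= 1 / p) by (apply Rmult_le_compat_l; [lra|apply Rinv_le_contravar; lra]).
    apply Rmult_le_compat; try (left; apply exp_pos).
    + apply Rle_Rpower_l; lra.
    + apply Rle_Rpower_l; [apply Rlt_le, Rdiv_pos_pos; lra|lra].
Qed.

Definition superlevel (f : nat -> R) (t : R) : nat -> bool :=
  fun b => if Rlt_dec t (f b) then true else false.

Lemma fsum_superlevel_markov n mu f t :
  (forall b, (b < n)%nat -> 0 <= mu b) -> (forall b, (b < n)%nat -> 0 <= f b) -> 0 <= t ->
  t * fsum n (fun b => if superlevel f t b then mu b else 0) <= fsum n (fun b => mu b * f b).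
Proof.
  intros Hmu Hf Ht. rewrite <- fsum_scal. apply fsum_le. intros b Hb.
  pose proof (Hmu b Hb). pose proof (Hf b Hb).
  unfold superlevel. destruct Rlt_dec; nra.
Qed.

Lemma fsum_sublevel_rpow n mu f t p :
  (forall b, (b < n)%nat -> 0 <= mu b) -> (forall b, (b < n)%nat -> 0 <= f b) ->
  0 <= t -> 1 <= p ->
  fsum n (fun b => (if superlevel f t b then 0 else mu b) * rpow (f b) p)
    <= rpow t (p - 1) * fsum n (fun b => mu b * f b).
Proof.
  intros Hmu Hf Ht Hp. rewrite <- fsum_scal. apply fsum_le. intros b Hb.
  pose proof (Hmu b Hb). pose proof (Hf b Hb). pose proof (rpow_nonneg t (p - 1)).
  unfold superlevel. destruct Rlt_dec as [Hlt|Hge].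
  - rewrite Rmult_0_l. apply Rmult_le_pos; [lra|]. apply Rmult_le_pos; lra.
  - rewrite (rpow_split_1 (f b)) by lra.
    assert (rpow (f b) (p - 1) * f b <= rpow t (p - 1) * f b)
      by (apply Rmult_le_compat_r; [lra|apply rpow_le_l; lra]).
    nra.
Qed.

Lemma rpow_threshold_eq T s p :
  0 < T -> 0 < s -> 0 < p ->
  rpow (rpow (T / s) (p - 1) * T) (1 / p) = Rpower s (1 / p - 1) * T.
Proof.
  intros HT Hs Hp.
  rewrite (rpow_Rpower (T / s)) by (apply Rdiv_pos_pos; lra).
  rewrite rpow_Rpower by (apply Rmult_lt_0_compat; [apply exp_pos|lra]).
  unfold Rpower, Rdiv. rewrite ln_mult, ln_exp, ln_mult, ln_Rinv by (try apply Rinv_pos; try apply exp_pos; lra).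
  rewrite <- (exp_ln T) at 3 by lra. rewrite <- exp_plus. f_equal. field. lra.
Qed.

Lemma fsum_stechkin n mu f p s :
  (forall b, (b < n)%nat -> 0 <= mu b) -> (forall b, (b < n)%nat -> 0 <= f b) ->
  1 <= p -> 0 < s ->
  exists S : nat -> bool,
    fsum n (fun b => if S b then mu b else 0) <= s /\
    rpow (fsum n (fun b => (if S b then 0 else mu b) * rpow (f b) p)) (1 / p)
      <= Rpower s (1 / p - 1) * fsum n (fun b => mu b * f b).
Proof.
  intros Hmu Hf Hp Hs.
  set (T := fsum n (fun b => mu b * f b)).
  assert (HT : 0 <= T) by (apply fsum_nonneg; intros; apply Rmult_le_pos; auto).
  set (t := T / s). assert (Ht : 0 <= t) by (apply Rle_mult_inv_pos; lra).
  exists (superlevel f t). split.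
  - destruct (Req_dec T 0) as [T0|T0].
    + (* the superlevel set above 0 is mu-null *)
      apply Rle_trans with (fsum n (fun _ => 0)); [|rewrite fsum_0; lra].
      apply fsum_le. intros b Hb. unfold superlevel. destruct Rlt_dec as [Hlt|]; [|lra].
      assert (t = 0) by (unfold t; rewrite T0; unfold Rdiv; ring).
      assert (mu b * f b = 0)
        by (apply (fsum_nonneg_eq0 n (fun b => mu b * f b)); auto;
            intros; apply Rmult_le_pos; auto).
      pose proof (Hmu b Hb). nra.
    + assert (Htp : 0 < t) by (apply Rdiv_pos_pos; lra).
      apply (Rmult_le_reg_l t); [exact Htp|].
      apply Rle_trans with T; [apply fsum_superlevel_markov; auto|].
      right. unfold t. field. lra.
  - apply Rle_trans with (rpow (rpow t (p - 1) * T) (1 / p)).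
    + apply rpow_le_l; [apply Rle_mult_inv_pos; lra|]. split.
      * apply fsum_nonneg. intros b Hb. apply Rmult_le_pos; [|apply rpow_nonneg].
        destruct (superlevel f t b); [lra|auto].
      * apply fsum_sublevel_rpow; auto.
    + destruct (Req_dec T 0) as [T0|T0].
      * rewrite T0, Rmult_0_r, rpow_0_l. lra.
      * right. apply rpow_threshold_eq; lra.
Qed.

Definition block_support (N : nat) (blk : nat -> nat) (u : nat -> R) : nat -> bool :=
  fun b => if Req_EM_T (blocknorm N blk u b) 0 then false else true.

Lemma winf_ge B w b : (b < B)%nat -> w b <= winf B w.
Proof.
  unfold winf. induction B as [|B IH]; simpl; intros Hb; [lia|].
  destruct (Nat.eq_dec b B) as [->|HbB]; [apply Rmax_r|].
  eapply Rle_trans; [apply IH; lia|apply Rmax_l].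
Qed.

Section WeightedBlockNorms.

Variables (N B : nat) (blk : nat -> nat) (w : nat -> R).
Hypothesis Hw : forall b, (b < B)%nat -> 1 <= w b.

Lemma blocknorm_nonneg u b : 0 <= blocknorm N blk u b.
Proof. apply sqrt_pos. Qed.

Lemma blocknorm_restr S u b :
  blocknorm N blk (restr blk S u) b = if S b then blocknorm N blk u b else 0.
Proof.
  unfold blocknorm, restr. destruct (S b) eqn:HS.
  - f_equal. apply fsum_ext. intros i _.
    destruct (Nat.eqb (blk i) b) eqn:E; [|reflexivity].
    apply Nat.eqb_eq in E. rewrite E, HS. reflexivity.
  - transitivity (sqrt (fsum N (fun _ => 0))); [|rewrite fsum_0; apply sqrt_0].
    f_equal. apply fsum_ext. intros i _.
    destruct (Nat.eqb (blk i) b) eqn:E; [|reflexivity].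
    apply Nat.eqb_eq in E. rewrite E, HS. ring.
Qed.

Lemma blocknorm_zero b : blocknorm N blk (fun _ => 0) b = 0.
Proof.
  unfold blocknorm. transitivity (sqrt (fsum N (fun _ => 0))); [|rewrite fsum_0; apply sqrt_0].
  f_equal. apply fsum_ext. intros i _. destruct Nat.eqb; [ring|reflexivity].
Qed.

Lemma blocknorm_opp u b : blocknorm N blk (fun i => - u i) b = blocknorm N blk u b.
Proof. unfold blocknorm. f_equal. apply fsum_ext. intros i _. destruct Nat.eqb; [ring|reflexivity]. Qed.

Lemma blocknorm_add_le u u1 u2 b :
  (forall i, u i = u1 i + u2 i) ->
  blocknorm N blk u b <= blocknorm N blk u1 b + blocknorm N blk u2 b.
Proof.
  intros Hu. unfold blocknorm.
  set (c := fun i => if Nat.eqb (blk i) b then 1 else 0).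
  replace (fsum N (fun i => if Nat.eqb (blk i) b then u i ^ 2 else 0))
    with (fsum N (fun i => (c i * u1 i + c i * u2 i) ^ 2)).
  replace (fsum N (fun i => if Nat.eqb (blk i) b then u1 i ^ 2 else 0))
    with (fsum N (fun i => (c i * u1 i) ^ 2)).
  replace (fsum N (fun i => if Nat.eqb (blk i) b then u2 i ^ 2 else 0))
    with (fsum N (fun i => (c i * u2 i) ^ 2)).
  { apply sqrt_fsum_sq_triangle. }
  all: apply fsum_ext; intros i _; unfold c; destruct Nat.eqb; try rewrite Hu; ring.
Qed.

Lemma blocknorm_sub_le u u1 u2 b :
  (forall i, u i = u1 i - u2 i) ->
  blocknorm N blk u b <= blocknorm N blk u1 b + blocknorm N blk u2 b.
Proof.
  intros Hu. rewrite <- (blocknorm_opp u2). apply blocknorm_add_le.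
  intros i. rewrite Hu. ring.
Qed.

Lemma wnorm_restr_measure p S u :
  wnorm N B blk w p (restr blk S u) =
  rpow (fsum B (fun b => (if S b then w b ^ 2 else 0)
                         * rpow (blocknorm N blk u b / w b) p)) (1 / p).
Proof.
  unfold wnorm. f_equal. apply fsum_ext. intros b Hb.
  rewrite blocknorm_restr. pose proof (Hw b Hb).
  destruct (S b); [|rewrite rpow_0_l; ring].
  destruct (Req_dec (blocknorm N blk u b) 0) as [E|E].
  { rewrite E. unfold Rdiv. rewrite Rmult_0_l, rpow_0_l. ring. }
  pose proof (blocknorm_nonneg u b).
  rewrite !rpow_Rpower by (try apply Rdiv_pos_pos; lra).
  rewrite <- (Rpower_pow 2) by lra. replace (INR 2) with 2 by (simpl; ring).
  unfold Rpower, Rdiv. rewrite ln_mult, ln_Rinv by (try apply Rinv_pos; lra).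
  rewrite <- !exp_plus. f_equal. ring.
Qed.

Lemma wnorm_measure p u :
  wnorm N B blk w p u =
  rpow (fsum B (fun b => w b ^ 2 * rpow (blocknorm N blk u b / w b) p)) (1 / p).
Proof. exact (wnorm_restr_measure p (fun _ => true) u). Qed.

Lemma wnorm1_restr S u :
  wnorm N B blk w 1 (restr blk S u)
    = fsum B (fun b => if S b then w b * blocknorm N blk u b else 0).
Proof.
  rewrite wnorm_restr_measure. replace (1 / 1) with 1 by field.
  rewrite rpow_1_r.
  - apply fsum_ext. intros b Hb. pose proof (Hw b Hb).
    destruct (S b); [|ring].
    rewrite rpow_1_r by (apply Rle_mult_inv_pos; [apply blocknorm_nonneg|lra]). field. lra.
  - apply fsum_nonneg. intros b Hb. apply Rmult_le_pos; [|apply rpow_nonneg].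
    destruct (S b); [apply pow2_ge_0|lra].
Qed.

Lemma wnorm1_eq u : wnorm N B blk w 1 u = fsum B (fun b => w b * blocknorm N blk u b).
Proof. exact (wnorm1_restr (fun _ => true) u). Qed.

Lemma wnorm1_split S u :
  wnorm N B blk w 1 u
    = wnorm N B blk w 1 (restr blk S u) + wnorm N B blk w 1 (restr blk (compl S) u).
Proof. rewrite wnorm1_eq, !wnorm1_restr. apply fsum_split_compl. Qed.

Lemma wnorm1_restr_le S u : wnorm N B blk w 1 (restr blk S u) <= wnorm N B blk w 1 u.
Proof.
  rewrite wnorm1_restr, wnorm1_eq. apply fsum_le. intros b Hb.
  pose proof (Hw b Hb). pose proof (blocknorm_nonneg u b). destruct (S b); nra.
Qed.

Lemma wnorm1_restr_sub_le S u u1 u2 :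
  (forall i, u i = u1 i - u2 i) ->
  wnorm N B blk w 1 (restr blk S u)
    <= wnorm N B blk w 1 (restr blk S u1) + wnorm N B blk w 1 (restr blk S u2).
Proof.
  intros Hu. rewrite !wnorm1_restr, <- fsum_plus. apply fsum_le. intros b Hb.
  destruct (S b); [|lra]. pose proof (Hw b Hb).
  pose proof (blocknorm_sub_le u u1 u2 b Hu). nra.
Qed.

Lemma wnorm_le_restr_compl p S u :
  1 <= p ->
  wnorm N B blk w p u
    <= wnorm N B blk w p (restr blk S u) + wnorm N B blk w p (restr blk (compl S) u).
Proof.
  intros Hp. rewrite wnorm_measure, !wnorm_restr_measure.
  set (F := fun b => w b ^ 2 * rpow (blocknorm N blk u b / w b) p).
  rewrite (fsum_split_compl B S F).
  rewrite (fsum_ext B (fun b => if S b then F b else 0)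
             (fun b => (if S b then w b ^ 2 else 0) * rpow (blocknorm N blk u b / w b) p))
    by (intros b _; unfold F; destruct (S b); ring).
  rewrite (fsum_ext B (fun b => if compl S b then F b else 0)
             (fun b => (if compl S b then w b ^ 2 else 0) * rpow (blocknorm N blk u b / w b) p))
    by (intros b _; unfold F; destruct (compl S b); ring).
  apply rpow_add_le.
  - apply fsum_nonneg. intros b _. apply Rmult_le_pos; [|apply rpow_nonneg].
    destruct (S b); [apply pow2_ge_0|lra].
  - apply fsum_nonneg. intros b _. apply Rmult_le_pos; [|apply rpow_nonneg].
    destruct (compl S b); [apply pow2_ge_0|lra].
  - split; [apply Rdiv_pos_pos; lra|].
    unfold Rdiv. rewrite Rmult_1_l, <- Rinv_1. apply Rinv_le_contravar; lra.
Qed.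

Lemma wnorm_restr_holder p q s S u :
  1 <= p <= q -> wsize B w S <= s ->
  wnorm N B blk w p (restr blk S u) <= Rpower s (1 / p - 1 / q) * wnorm N B blk w q (restr blk S u).
Proof.
  intros Hpq HS. rewrite !wnorm_restr_measure.
  apply fsum_rpow_holder; [| |exact Hpq|exact HS].
  - intros b _. destruct (S b); [apply pow2_ge_0|lra].
  - intros b Hb. apply Rle_mult_inv_pos; [apply blocknorm_nonneg|]. pose proof (Hw b Hb). lra.
Qed.

Lemma wnorm_stechkin p s u :
  1 <= p -> 0 < s ->
  exists S, wsize B w S <= s /\
    wnorm N B blk w p (restr blk (compl S) u) <= Rpower s (1 / p - 1) * wnorm N B blk w 1 u.
Proof.
  intros Hp Hs.
  destruct (fsum_stechkin B (fun b => w b ^ 2) (fun b => blocknorm N blk u b / w b) p s)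
    as [S [HS Htail]]; [intros; apply pow2_ge_0| |exact Hp|exact Hs|].
  { intros b Hb. apply Rle_mult_inv_pos; [apply blocknorm_nonneg|]. pose proof (Hw b Hb). lra. }
  exists S. split; [exact HS|].
  rewrite wnorm_restr_measure, wnorm1_eq.
  rewrite (fsum_ext B _ (fun b => (if S b then 0 else w b ^ 2) * rpow (blocknorm N blk u b / w b) p))
    by (intros b _; unfold compl; destruct (S b); reflexivity).
  rewrite (fsum_ext B (fun b => w b * blocknorm N blk u b)
             (fun b => w b ^ 2 * (blocknorm N blk u b / w b))).
  - exact Htail.
  - intros b Hb. pose proof (Hw b Hb). field. lra.
Qed.

Lemma wnorm1_restr_compl_support_le x z :
  wnorm N B blk w 1 (restr blk (compl (block_support N blk z)) x)
    <= wnorm N B blk w 1 (fun i => x i - z i).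
Proof.
  rewrite wnorm1_restr, wnorm1_eq. apply fsum_le. intros b Hb.
  pose proof (Hw b Hb). pose proof (blocknorm_nonneg (fun i => x i - z i) b).
  unfold compl, block_support. destruct Req_EM_T as [Ez|Ez]; simpl; [|nra].
  assert (blocknorm N blk x b <= blocknorm N blk (fun i => x i - z i) b + blocknorm N blk z b)
    by (apply blocknorm_add_le; intros; ring).
  nra.
Qed.

Lemma wnorm1_sub_le_of_cone rho K S x z :
  0 <= rho < 1 ->
  wnorm N B blk w 1 (restr blk S (fun i => z i - x i))
    <= rho * wnorm N B blk w 1 (restr blk (compl S) (fun i => z i - x i)) + K ->
  wnorm N B blk w 1 (fun i => z i - x i)
    <= ((1 + rho) * (wnorm N B blk w 1 z - wnorm N B blk w 1 x
                     + 2 * wnorm N B blk w 1 (restr blk (compl S) x)) + 2 * K) / (1 - rho).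
Proof.
  intros Hrho Hcone.
  rewrite (wnorm1_split S (fun i => z i - x i)), (wnorm1_split S z), (wnorm1_split S x).
  set (W1 := wnorm N B blk w 1).
  assert (HxS : W1 (restr blk S x) <= W1 (restr blk S z) + W1 (restr blk S (fun i => z i - x i)))
    by (apply wnorm1_restr_sub_le; intros; ring).
  assert (HvC : W1 (restr blk (compl S) (fun i => z i - x i))
                  <= W1 (restr blk (compl S) z) + W1 (restr blk (compl S) x))
    by (apply wnorm1_restr_sub_le; intros; ring).
  fold W1 in Hcone.
  apply (Rmult_le_reg_l (1 - rho)); [lra|].
  replace ((1 - rho) * (_ / (1 - rho))) with
    ((1 + rho) * (W1 (restr blk S z) + W1 (restr blk (compl S) z)
                  - (W1 (restr blk S x) + W1 (restr blk (compl S) x))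
                  + 2 * W1 (restr blk (compl S) x)) + 2 * K) by (field; lra).
  nra.
Qed.

End WeightedBlockNorms.

Lemma is_glb_exists (E : R -> Prop) :
  (exists y, E y) -> (forall y, E y -> 0 <= y) -> exists r, is_glb E r.
Proof.
  intros [y0 Hy0] Hlb.
  destruct (completeness (fun y => E (- y))) as [m [Hub Hleast]].
  - exists 0. intros y Hy. pose proof (Hlb _ Hy). lra.
  - exists (- y0). rewrite Ropp_involutive. exact Hy0.
  - exists (- m). split.
    + intros y Hy. assert (- y <= m) by (apply Hub; rewrite Ropp_involutive; exact Hy). lra.
    + intros l Hl. assert (m <= - l) by (apply Hleast; intros y Hy; pose proof (Hl _ Hy); lra). lra.
Qed.

Lemma best_s_term_err_glb N B blk w s p x :
  0 <= s ->
  is_glb (fun r => exists z, wzero N B blk w z <= s /\ r = wnorm N B blk w p (fun i => x i - z i))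
         (best_s_term_err N B blk w s p x).
Proof.
  intros Hs. unfold best_s_term_err. apply epsilon_spec, is_glb_exists.
  - exists (wnorm N B blk w p (fun i => x i - 0)), (fun _ => 0). split; [|reflexivity].
    unfold wzero, wsize. rewrite (fsum_ext _ _ (fun _ => 0)), fsum_0; [exact Hs|].
    intros b _. rewrite blocknorm_zero. destruct Req_EM_T; [reflexivity|lra].
  - intros y [z [_ ->]]. apply rpow_nonneg.
Qed.

Lemma le_best_s_term_err N B blk w s p x L :
  0 <= s ->
  (forall z, wzero N B blk w z <= s -> L <= wnorm N B blk w p (fun i => x i - z i)) ->
  L <= best_s_term_err N B blk w s p x.
Proof.
  intros Hs HL. apply (proj2 (best_s_term_err_glb N B blk w s p x Hs)).
  intros r [z [Hz ->]]. exact (HL z Hz).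
Qed.

Lemma le_affine_best_s_term_err N B blk w s p x y a d e :
  0 <= s -> 0 < a ->
  (forall z, wzero N B blk w z <= s ->
     y <= a * (d + 2 * wnorm N B blk w p (fun i => x i - z i)) + e) ->
  y <= a * (d + 2 * best_s_term_err N B blk w s p x) + e.
Proof.
  intros Hs Ha Hy.
  assert (Hdiv : (y - e) / a <= d + 2 * best_s_term_err N B blk w s p x).
  { enough (((y - e) / a - d) / 2 <= best_s_term_err N B blk w s p x) by lra.
    apply le_best_s_term_err; [exact Hs|]. intros z Hz. specialize (Hy z Hz).
    enough ((y - e) / a <= d + 2 * wnorm N B blk w p (fun i => x i - z i)) by lra.
    apply (Rmult_le_reg_l a); [exact Ha|].
    replace (a * ((y - e) / a)) with (y - e) by (field; lra). lra. }
  replace y with (a * ((y - e) / a) + e) by (field; lra).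
  apply Rplus_le_compat_r, Rmult_le_compat_l; lra.
Qed.

Section RobustNullSpaceProperty.

Variables (m N B : nat) (blk : nat -> nat) (w : nat -> R) (A : nat -> nat -> R).
Variables (q s rho tau : R).
Hypothesis Hw : forall b, (b < B)%nat -> 1 <= w b.
Hypothesis Hs : 0 < s.
Hypothesis Hrho : 0 <= rho < 1.
Hypothesis Hnsp : forall (x : nat -> R) (S : nat -> bool),
  wsize B w S <= s ->
  wnorm N B blk w q (restr blk S x)
    <= rho / Rpower s (1 - 1 / q) * wnorm N B blk w 1 (restr blk (compl S) x)
       + tau * norm2 m (matvec m N A x).

Lemma nsp_lp p x S :
  1 <= p <= q -> wsize B w S <= s ->
  wnorm N B blk w p (restr blk S x)
    <= rho / Rpower s (1 - 1 / p) * wnorm N B blk w 1 (restr blk (compl S) x)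
       + tau * Rpower s (1 / p - 1 / q) * norm2 m (matvec m N A x).
Proof.
  intros Hpq HS.
  pose proof (wnorm_restr_holder N B blk w Hw p q s S x Hpq HS) as Hholder.
  pose proof (Hnsp x S HS) as Hq.
  assert (Esplit : Rpower s (1 - 1 / q) = Rpower s (1 - 1 / p) * Rpower s (1 / p - 1 / q))
    by (rewrite <- Rpower_plus; f_equal; ring).
  rewrite Esplit in Hq.
  assert (Ha : 0 < Rpower s (1 - 1 / p)) by apply exp_pos.
  assert (Hb : 0 < Rpower s (1 / p - 1 / q)) by apply exp_pos.
  eapply Rle_trans; [exact Hholder|].
  eapply Rle_trans; [apply Rmult_le_compat_l; [lra|exact Hq]|].
  right. field. lra.
Qed.

Lemma nsp_wnorm_le_wnorm1 p v :
  1 <= p <= q ->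
  wnorm N B blk w p v
    <= (1 + rho) / Rpower s (1 - 1 / p) * wnorm N B blk w 1 v
       + tau * Rpower s (1 / p - 1 / q) * norm2 m (matvec m N A v).
Proof.
  intros Hpq.
  destruct (wnorm_stechkin N B blk w Hw p s v) as [S [HS Htail]]; [lra|exact Hs|].
  pose proof (wnorm_le_restr_compl N B blk w Hw p S v ltac:(lra)) as Hsplit.
  pose proof (nsp_lp p v S Hpq HS) as Hhead.
  pose proof (wnorm1_restr_le N B blk w Hw (compl S) v) as Hcompl.
  assert (Ha : 0 < Rpower s (1 - 1 / p)) by apply exp_pos.
  replace (1 / p - 1) with (- (1 - 1 / p)) in Htail by ring.
  rewrite Rpower_Ropp in Htail.
  assert (rho / Rpower s (1 - 1 / p) * wnorm N B blk w 1 (restr blk (compl S) v)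
            <= rho / Rpower s (1 - 1 / p) * wnorm N B blk w 1 v)
    by (apply Rmult_le_compat_l; [apply Rle_mult_inv_pos; lra|exact Hcompl]).
  replace ((1 + rho) / Rpower s (1 - 1 / p) * wnorm N B blk w 1 v)
    with (rho / Rpower s (1 - 1 / p) * wnorm N B blk w 1 v
          + / Rpower s (1 - 1 / p) * wnorm N B blk w 1 v) by (field; lra).
  lra.
Qed.

Lemma nsp_l1 x S :
  1 <= q -> wsize B w S <= s ->
  wnorm N B blk w 1 (restr blk S x)
    <= rho * wnorm N B blk w 1 (restr blk (compl S) x)
       + tau * Rpower s (1 - 1 / q) * norm2 m (matvec m N A x).
Proof.
  intros Hq HS. pose proof (nsp_lp 1 x S ltac:(lra) HS) as H.
  replace (1 - 1 / 1) with 0 in H by field. replace (1 / 1) with 1 in H by field.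
  rewrite Rpower_O in H by exact Hs. unfold Rdiv in H. rewrite Rinv_1, Rmult_1_r in H.
  exact H.
Qed.

Lemma nsp_error_bound p x z S :
  1 <= p <= q -> wsize B w S <= s ->
  wnorm N B blk w p (fun i => z i - x i)
    <= ((1 + rho) ^ 2 / (1 - rho)) / Rpower s (1 - 1 / p)
         * (wnorm N B blk w 1 z - wnorm N B blk w 1 x
            + 2 * wnorm N B blk w 1 (restr blk (compl S) x))
       + ((3 + rho) / (1 - rho) * tau) / Rpower s (1 / q - 1 / p)
         * norm2 m (matvec m N A (fun i => z i - x i)).
Proof.
  intros Hpq HS. set (v := fun i => z i - x i).
  set (eta := norm2 m (matvec m N A v)).
  set (Q := wnorm N B blk w 1 z - wnorm N B blk w 1 x
            + 2 * wnorm N B blk w 1 (restr blk (compl S) x)).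
  set (a := Rpower s (1 - 1 / p)). set (c := Rpower s (1 / p - 1 / q)).
  assert (Ha : 0 < a) by apply exp_pos. assert (Hc : 0 < c) by apply exp_pos.
  assert (Eac : Rpower s (1 - 1 / q) = a * c) by (unfold a, c; rewrite <- Rpower_plus; f_equal; ring).
  assert (Ec : Rpower s (1 / q - 1 / p) = / c)
    by (unfold c; rewrite <- Rpower_Ropp; f_equal; ring).
  pose proof (wnorm1_sub_le_of_cone N B blk w Hw rho (tau * Rpower s (1 - 1 / q) * eta) S x z
                ltac:(lra) (nsp_l1 v S ltac:(lra) HS)) as Hl1.
  fold v Q in Hl1. rewrite Eac in Hl1.
  pose proof (nsp_wnorm_le_wnorm1 p v Hpq) as Hp. fold a c eta in Hp.
  rewrite Ec.
  eapply Rle_trans; [exact Hp|].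
  apply Rle_trans with ((1 + rho) / a * (((1 + rho) * Q + 2 * (tau * (a * c) * eta)) / (1 - rho))
                        + tau * c * eta).
  - apply Rplus_le_compat_r, Rmult_le_compat_l; [apply Rle_mult_inv_pos; lra|exact Hl1].
  - right. field. lra.
Qed.

End RobustNullSpaceProperty.

Theorem mainTheorem4
  (m N B : nat) (blk : nat -> nat) (w : nat -> R)
  (Hblk : forall i, (i < N)%nat -> (blk i < B)%nat)
  (Hnonempty : forall b, (b < B)%nat -> exists i, (i < N)%nat /\ blk i = b)
  (Hw : forall b, (b < B)%nat -> 1 <= w b)
  (p q : R) (Hp : 1 <= p) (Hpq : p <= q) (Hq : q <= 2)
  (A : nat -> nat -> R) (s rho tau : R)
  (Hs : (winf B w)^2 <= s)
  (Hrho : 0 < rho < 1) (Htau : 0 < tau)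
  (HA : BRNSP m N B blk w A q s rho tau)
  (x z : nat -> R) :
  wnorm N B blk w p (fun i => z i - x i)
    <= ((1 + rho)^2 / (1 - rho)) / Rpower s (1 - 1 / p)
         * (wnorm N B blk w 1 z - wnorm N B blk w 1 x
            + 2 * best_s_term_err N B blk w s 1 x)
       + ((3 + rho) / (1 - rho) * tau) / Rpower s (1 / q - 1 / p)
         * norm2 m (matvec m N A (fun i => z i - x i)).
Proof.
  destruct HA as [_ [_ [_ Hnsp]]].
  assert (Hs0 : 0 <= s) by (pose proof (pow2_ge_0 (winf B w)); lra).
  set (a := ((1 + rho) ^ 2 / (1 - rho)) / Rpower s (1 - 1 / p)).
  set (e := ((3 + rho) / (1 - rho) * tau) / Rpower s (1 / q - 1 / p)
            * norm2 m (matvec m N A (fun i => z i - x i))).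
  assert (Ha : 0 < a) by (apply Rdiv_pos_pos; [apply Rdiv_pos_pos|apply exp_pos]; nra).
  assert (He : 0 <= e).
  { apply Rmult_le_pos; [|apply sqrt_pos]. apply Rle_mult_inv_pos; [|apply exp_pos].
    apply Rmult_le_pos; [apply Rle_mult_inv_pos|]; lra. }
  destruct B as [|B'].
  { assert (0 <= best_s_term_err N 0 blk w s 1 x)
      by (apply le_best_s_term_err; [exact Hs0|intros; apply rpow_nonneg]).
    unfold wnorm. simpl. rewrite !rpow_0_l. nra. }
  assert (Hs1 : 0 < s).
  { pose proof (winf_ge (S B') w 0 ltac:(lia)). pose proof (Hw 0%nat ltac:(lia)). nra. }
  apply le_affine_best_s_term_err; [exact Hs0|exact Ha|]. intros z' Hz'.
  eapply Rle_trans.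
  { apply (nsp_error_bound m N (S B') blk w A q s rho tau Hw Hs1 ltac:(lra) Hnsp p x z
             (block_support N blk z')); [lra|exact Hz']. }
  apply Rplus_le_compat_r, Rmult_le_compat_l; [lra|].
  apply Rplus_le_compat_l, Rmult_le_compat_l; [lra|].
  apply wnorm1_restr_compl_support_le. exact Hw.
Qed.
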